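(* If a connected graph $G$ of order $n$ satisfies $\mathrm{sn}(G)=n-2$, then $\mathrm{ivs}_\chi(G)=1$.
   Context: All graphs are finite and simple. For a graph $G=(V,E)$ with $k=\chi(G)$, a proper $k$-colouring is a map $c:V\to[k]$ with $c(u)\neq c(v)$ for every edge $uv$. A set $S\subseteq V$ is a determining set for $(G,c)$ if there is no proper $k$-colouring $c'\neq c$ with $c'(s)=c(s)$ for all $s\in S$; a critical set is an inclusion-minimal determining set. $\mathrm{sn}(G)$ is the minimum size of a critical set over all proper $\chi(G)$-colourings $c$ of $G$ (equivalently, the minimum number of vertices coloured in a partial colouring that extends uniquely to a proper $\chi(G)$-colouring). The independent chromatic vertex stability number $\mathrm{ivs}_\chi(G)$ is the size of a smallest independent set $S\subseteq V$ such that $\chi(G\setminus S)<\chi(G)$. *)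

(* Simple graphs: a symmetric irreflexive relation e on a finType T. *)
From mathcomp Require Import all_boot.
Unset Printing Implicit Defensive.

Section Graphs.
Variable T : finType.
Implicit Types (e : rel T) (S : {set T}).

(* c : T -> 'I_k is a proper k-colouring (colours 0..k-1 stand for [k]) *)
Definition proper_col e {k} (c : {ffun T -> 'I_k}) : bool :=
  [forall x, forall y, e x y ==> (c x != c y)].

Definition colourable e k : bool := [exists c : {ffun T -> 'I_k}, proper_col e c].

(* chromatic number: least k admitting a proper k-colouring
   (a proper #|T|-colouring always exists for an irreflexive e) *)
Definition chi e : nat := \big[minn/#|T|]_(k < #|T|.+1 | colourable e k) k.

Definition determining (e : rel T) (c : {ffun T -> 'I_(chi e)}) S : bool :=
  [forall c' : {ffun T -> 'I_(chi e)},
     (proper_col e c' && [forall s in S, c' s == c s]) ==> (c' == c)].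

Definition critical (e : rel T) (c : {ffun T -> 'I_(chi e)}) S : bool :=
  determining e c S && [forall S' : {set T}, (S' \proper S) ==> ~~ determining e c S'].

Definition sn e : nat :=
  \big[minn/#|T|]_(c : {ffun T -> 'I_(chi e)} | proper_col e c)
     \big[minn/#|T|]_(S : {set T} | critical e c S) #|S|.

Definition independent e S : bool := [forall x in S, forall y in S, ~~ e x y].

Definition connected e : Prop := forall x y : T, connect e x y.
End Graphs.
Arguments proper_col {T} e {k} c.
Arguments colourable {T} e k.
Arguments chi {T} e.
Arguments determining {T} e c S.
Arguments critical {T} e c S.
Arguments sn {T} e.
Arguments independent {T} e S.
Arguments connected {T} e.

Definition induced {T : finType} (e : rel T) (A : {set T}) : rel {x : T | x \in A} :=
  fun x y => e (val x) (val y).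

Definition ivs_chi {T : finType} (e : rel T) : nat :=
  \big[minn/#|T|]_(S : {set T} | independent e S && (chi (induced e (~: S)) < chi e)) #|S|.

(* Fix an optimal colouring c and call v a b-vertex if every other colour occurs
   in its neighbourhood.  If some colour class has at most one b-vertex f, the
   other vertices of that class can be recoloured, so chi(G - f) < chi(G).
   Otherwise every class contains two b-vertices.  Since sn(G) = n - 2, there is
   no triple u1, u2, u3 in which each u_j sees every colour other than its own
   outside {u_j, ..., u_3}: colouring the other n - 3 vertices would then
   determine c.  For two b-vertices a1, a2 of the same colour, this rigidity
   forces the closed neighbourhood of a1 to be closed under adjacency while it
   misses a2, contradicting connectivity. *)

From mathcomp Require Import all_boot order.
Import Order.TTheory Order.NatOrder.

Set Implicit Arguments. Unset Strict Implicit. Unset Printing Implicit Defensive.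

Lemma bigminn_le_cond (I : finType) (P : pred I) (F : I -> nat) d j :
  P j -> \big[minn/d]_(i | P i) F i <= F j.
Proof. by move=> Pj; rewrite -minEnat -leEnat; apply: bigmin_le_cond. Qed.

Lemma bigminn_le_id (I : finType) (P : pred I) (F : I -> nat) d :
  \big[minn/d]_(i | P i) F i <= d.
Proof. by rewrite -minEnat -leEnat; apply: bigmin_le_id. Qed.

Lemma bigminn_geP (I : finType) (P : pred I) (F : I -> nat) d m :
  reflect (m <= d /\ forall i, P i -> m <= F i) (m <= \big[minn/d]_(i | P i) F i).
Proof. by rewrite -minEnat -!leEnat; apply: bigmin_geP. Qed.

Section Colourings.
Variables (T : finType) (e : rel T).

Lemma properP k (c : {ffun T -> 'I_k}) :
  reflect (forall x y, e x y -> c x != c y) (proper_col e c).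
Proof.
apply: (iffP forallP) => [pc x y | pc x]; first exact/implyP/(forallP (pc x)).
by apply/forallP => y; apply/implyP/pc.
Qed.

Lemma colourable_card : irreflexive e -> colourable e #|T|.
Proof.
move=> irr_e; apply/existsP; exists [ffun x => enum_rank x]; apply/properP => x y.
by rewrite !ffunE; apply: contraTneq => /enum_rank_inj ->; rewrite irr_e.
Qed.

Lemma chi_le k : colourable e k -> chi e <= k.
Proof.
move=> ck; case: (ltnP k #|T|.+1) => [lt_k | /ltnW le_k].
  exact: (@bigminn_le_cond _ _ _ _ (Ordinal lt_k)).
exact: leq_trans (bigminn_le_id _ _ _) le_k.
Qed.

Lemma colourable_chi : irreflexive e -> colourable e (chi e).
Proof.
move=> irr_e; apply: (big_ind (colourable e)) => //; first exact: colourable_card.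
by move=> m n cm cn; rewrite /minn; case: ifP.
Qed.

End Colourings.

Section Induced.
Variables (T : finType) (e : rel T).
Hypothesis irr_e : irreflexive e.

Lemma induced_irr (A : {set T}) : irreflexive (induced e A).
Proof. by move=> x; apply: irr_e. Qed.

Lemma chi_le_induced_setT : chi e <= chi (induced e [set: T]).
Proof.
apply: chi_le; have /existsP[c pc] := colourable_chi (@induced_irr [set: T]).
apply/existsP; exists [ffun x => c (exist _ x (in_setT x))]; apply/properP => x y exy.
by rewrite !ffunE; apply: (properP _ _ pc).
Qed.

Lemma colourable_induced_avoid k (c : {ffun T -> 'I_k}) (i : 'I_k) (A : {set T}) x0 :
  proper_col e c -> x0 \in A -> {in A, forall x, c x != i} ->
  colourable (induced e A) k.-1.
Proof.
move=> pc Ax0 ci; have [d _ _] := unlift_some (ci x0 Ax0).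
apply/existsP; exists [ffun x => odflt d (unlift i (c (val x)))].
apply/properP => x y exy; rewrite !ffunE.
have := ci _ (valP x); rewrite eq_sym => /unlift_some[jx cx ->].
have := ci _ (valP y); rewrite eq_sym => /unlift_some[jy cy ->] /=.
by apply: contraNneq (properP _ _ pc _ _ exy); rewrite cx cy => ->.
Qed.

Lemma chi_induced_lt k (c : {ffun T -> 'I_k}) (i : 'I_k) (A : {set T}) x0 :
  proper_col e c -> x0 \in A -> {in A, forall x, c x != i} -> chi (induced e A) < k.
Proof.
move=> pc Ax0 ci; apply: leq_ltn_trans (chi_le (colourable_induced_avoid pc Ax0 ci)) _.
by rewrite prednK ?(leq_ltn_trans _ (ltn_ord i)).
Qed.

Lemma ivs_chi_eq1 f : chi (induced e (~: [set f])) < chi e -> ivs_chi e = 1.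
Proof.
move=> chi_f; apply/eqP; rewrite eqn_leq; apply/andP; split.
  rewrite -(cards1 f); apply: bigminn_le_cond; rewrite chi_f andbT.
  by apply/forall_inP => x /set1P->; apply/forall_inP => y /set1P->; rewrite irr_e.
apply/bigminn_geP; split=> [|S /andP[_]]; first by apply/card_gt0P; exists f.
rewrite card_gt0; apply: contraTneq => ->.
by rewrite setC0 -leqNgt chi_le_induced_setT.
Qed.

End Induced.

Section Forcing.
Variables (T : finType) (e : rel T) (k : nat).
Implicit Types (c : {ffun T -> 'I_k}) (s : seq T).

Definition b_vertex c v := [forall l, (l != c v) ==> [exists x, e v x && (c x == l)]].

Definition forced c s v :=
  [forall l, (l != c v) ==> [exists x, [&& x \notin s, e v x & c x == l]]].

(* Once every vertex outside s is coloured, the vertices of s can be coloured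
   one at a time, each forced by its neighbours outside the remaining suffix. *)
Fixpoint forcing_seq c s : bool :=
  if s is v :: s' then forced c s v && forcing_seq c s' else true.

Lemma forced_eq c c' s v : proper_col e c' -> forced c s v ->
  (forall x, x \notin s -> c' x = c x) -> c' v = c v.
Proof.
move=> pc' /forallP fv agree; apply/eqP; apply: contraT => neq.
have /existsP[x /and3P[xs evx /eqP cx]] := implyP (fv (c' v)) neq.
by have := properP _ _ pc' _ _ evx; rewrite (agree x xs) cx eqxx.
Qed.

Lemma forcing_seq_eq c c' s : proper_col e c' -> forcing_seq c s ->
  (forall x, x \notin s -> c' x = c x) -> c' = c.
Proof.
move=> pc'; elim: s => [_ agree | v s IHs /= /andP[fv fs] agree].
  by apply/ffunP => x; apply: agree.
apply: IHs fs _ => x; case: (eqVneq x v) => [-> _ | xv xs].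
  exact: forced_eq fv agree.
by apply: agree; rewrite inE negb_or xv.
Qed.

Lemma forced_b_vertex c s v : b_vertex c v ->
  (forall x, x \in s -> e v x -> exists2 y, y \notin s & e v y && (c y == c x)) ->
  forced c s v.
Proof.
move=> /forallP bv seen; apply/forallP => l; apply/implyP => lv.
have /existsP[x /andP[evx /eqP cx]] := implyP (bv l) lv.
case xs: (x \in s); last by apply/existsP; exists x; rewrite xs evx cx eqxx.
have [y ys /andP[evy cy]] := seen x xs evx.
by apply/existsP; exists y; rewrite ys evy -cx.
Qed.

Lemma forced_b_vertex_isolated c s v : b_vertex c v ->
  (forall x, x \in s -> ~~ e v x) -> forced c s v.
Proof.
move=> bv isolated; apply: forced_b_vertex bv _ => x xs evx.
by have := isolated x xs; rewrite evx.
Qed.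

End Forcing.

Section CriticalSets.
Variables (T : finType) (e : rel T).
Implicit Types (c : {ffun T -> 'I_(chi e)}) (D : {set T}).

Lemma critical_sub c D : determining e c D -> exists2 S, critical e c S & S \subset D.
Proof.
move=> dD; have [S /minsetP[dS minS] sSD] := minset_exists dD.
exists S => //; rewrite /critical dS; apply/forallP => S'.
apply/implyP => /andP[sS'S]; apply: contra => dS'.
by rewrite (minS S' dS' sS'S).
Qed.

Lemma sn_le_determining c D : proper_col e c -> determining e c D -> sn e <= #|D|.
Proof.
move=> pc dD; have [S cS sSD] := critical_sub dD.
apply: leq_trans (subset_leq_card sSD).
exact: leq_trans (bigminn_le_cond _ _ pc) (bigminn_le_cond _ _ cS).
Qed.

Lemma determining_forcing_seq c s :
  forcing_seq e c s -> determining e c (~: [set x in s]).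
Proof.
move=> fs; apply/forallP => c'; apply/implyP => /andP[pc' /forall_inP agree].
by apply/eqP; apply: forcing_seq_eq pc' fs _ => x xs; apply/eqP/agree; rewrite !inE.
Qed.

Lemma sn_forcing_seq c s : proper_col e c -> uniq s -> forcing_seq e c s ->
  sn e + size s <= #|T|.
Proof.
move=> pc us fs; rewrite -(card_uniqP us) -cardsE -(cardsC [set x in s]) addnC.
by rewrite leq_add2l (sn_le_determining pc (determining_forcing_seq fs)).
Qed.

End CriticalSets.

Section Recolouring.
Variables (T : finType) (e : rel T) (k : nat).
Hypothesis sym_e : symmetric e.
Variables (c : {ffun T -> 'I_k}) (i : 'I_k).
Hypothesis pc : proper_col e c.

Definition missing_colour v := [pick l | (l != c v) && ~~ [exists x, e v x && (c x == l)]].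

Definition recolour : {ffun T -> 'I_k} :=
  [ffun v => if c v == i then odflt (c v) (missing_colour v) else c v].

Lemma recolour_proper : proper_col e recolour.
Proof.
apply/properP => u v euv; rewrite !ffunE; have cuv := properP _ _ pc _ _ euv.
case: (eqVneq (c u) i) => [cu | cu]; case: (eqVneq (c v) i) => [cv | cv] //=.
- by move: cuv; rewrite cu cv eqxx.
- rewrite /missing_colour; case: pickP => [l /andP[_ /existsPn nl] | _] /=.
    by apply: contraTneq (nl v) => <-; rewrite euv eqxx.
  by rewrite cu eq_sym.
- rewrite /missing_colour; case: pickP => [l /andP[_ /existsPn nl] | _] /=.
    by apply: contraTneq (nl u) => ->; rewrite sym_e euv eqxx.
  by rewrite cv.
Qed.

Lemma recolour_eq v : recolour v = i -> c v = i /\ b_vertex e c v.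
Proof.
rewrite ffunE; case: (eqVneq (c v) i) => [cv | cv /eqP] /=; last by rewrite (negbTE cv).
rewrite /missing_colour; case: pickP => [l /andP[lv _] /= li | none _].
  by move: lv; rewrite li cv eqxx.
split=> //; apply/forallP => l; apply/implyP => lv.
by have := none l; rewrite lv => /negbFE.
Qed.

End Recolouring.

Section LoneBVertex.
Variables (T : finType) (e : rel T).
Hypothesis sym_e : symmetric e.

(* Every vertex of colour i other than a b-vertex can move to a colour missing
   from its neighbourhood, which leaves f alone in class i. *)
Lemma chi_delete_lone_b_vertex (c : {ffun T -> 'I_(chi e)}) i f :
  proper_col e c -> 1 < #|T| -> (forall v, c v = i -> b_vertex e c v -> v = f) ->
  chi (induced e (~: [set f])) < chi e.
Proof.
move=> pc n_gt1 lone.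
have [x0 x0f] : exists x0, x0 \in ~: [set f].
  by apply/card_gt0P; rewrite cardsC1 -ltnS prednK // (leq_trans _ n_gt1).
apply: (chi_induced_lt (recolour_proper sym_e i pc) x0f) => v.
rewrite !inE; apply: contraNneq => /(recolour_eq (c := c)) [cv bv].
exact/eqP/lone.
Qed.

End LoneBVertex.

Section TwoBVerticesPerClass.
Variables (T : finType) (e : rel T) (k : nat).
Hypotheses (sym_e : symmetric e) (irr_e : irreflexive e).
Variable c : {ffun T -> 'I_k}.
Hypothesis pc : proper_col e c.
Hypothesis another_b_vertex :
  forall (l : 'I_k) v, exists2 w, w != v & (c w == l) && b_vertex e c w.
Hypothesis no_forcing_triple :
  forall u1 u2 u3, uniq [:: u1; u2; u3] -> ~~ forcing_seq e c [:: u1; u2; u3].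

Let adj_colour_neq x y : e x y -> c x != c y := properP _ _ pc x y.

Lemma same_colour_nonadj x y : c x = c y -> ~~ e x y.
Proof. by move=> cxy; apply/negP => /adj_colour_neq; rewrite cxy eqxx. Qed.

Lemma adj_neq x y : e x y -> x != y.
Proof. by apply: contraTneq => ->; rewrite irr_e. Qed.

Lemma neq_of_colour x y : c x != c y -> x != y.
Proof. by apply: contraNneq => ->. Qed.

Lemma no_forcing_triple_at u1 u2 u3 : u1 != u2 -> u1 != u3 -> u2 != u3 ->
  forced e c [:: u1; u2; u3] u1 -> forced e c [:: u2; u3] u2 -> b_vertex e c u3 -> False.
Proof.
move=> u12 u13 u23 f1 f2 b3; have := @no_forcing_triple u1 u2 u3.
rewrite /= !inE !negb_or u12 u13 u23 f1 f2 /= andbT => /(_ isT)/negP; apply.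
apply: forced_b_vertex_isolated b3 _ => x.
by rewrite inE => /eqP->; rewrite irr_e.
Qed.

Section BVertexPair.
Variables a1 a2 : T.
Hypotheses (a12 : a1 != a2) (ca : c a2 = c a1).
Hypotheses (ba1 : b_vertex e c a1) (ba2 : b_vertex e c a2).

Let na1a2 : ~~ e a1 a2 := same_colour_nonadj (esym ca).

Lemma b_vertex_adj_pair b : b_vertex e c b -> c b != c a1 -> e a1 b || e a2 b.
Proof.
move=> bb cb; apply: contraT; rewrite negb_or => /andP[na1b na2b].
have a1b : a1 != b by rewrite eq_sym neq_of_colour.
have a2b : a2 != b by rewrite eq_sym neq_of_colour // ca.
exfalso; apply: (no_forcing_triple_at a12 a1b a2b) => //.
  apply: forced_b_vertex_isolated => // x; rewrite !inE => /or3P[] /eqP-> //.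
  by rewrite irr_e.
apply: forced_b_vertex_isolated => // x; rewrite !inE => /orP[] /eqP-> //.
by rewrite irr_e.
Qed.

Lemma adj_b_vertex_colour_unique b y :
  b_vertex e c b -> e a1 b -> e a1 y -> c y = c b -> y = b.
Proof.
move=> bb a1b a1y cy; apply/eqP; apply: contraT => yb.
have cb : c b != c a1 by rewrite eq_sym adj_colour_neq.
have a1b' : a1 != b by rewrite adj_neq.
have ba2' : b != a2 by apply: neq_of_colour; rewrite ca.
exfalso; apply: (no_forcing_triple_at a1b' a12 ba2') => //.
  apply: forced_b_vertex => // x; rewrite !inE => /or3P[] /eqP-> a1x.
  - by rewrite irr_e in a1x.
  - exists y; last by rewrite a1y cy eqxx.
    rewrite !inE !negb_or yb eq_sym adj_neq //=.
    by apply: neq_of_colour; rewrite cy ca.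
  - by move: na1a2; rewrite a1x.
apply: forced_b_vertex => // x; rewrite !inE => /orP[] /eqP-> bx.
  by rewrite irr_e in bx.
exists a1; first by rewrite !inE !negb_or a1b' a12.
by rewrite sym_e a1b ca eqxx.
Qed.

Lemma b_vertex_nbr_in_pair b y :
  b_vertex e c b -> e b y -> c y = c a1 -> (y == a1) || (y == a2).
Proof.
move=> bb eby cy; apply: contraT; rewrite negb_or => /andP[ya1 ya2].
have cb : c b != c a1 by rewrite -cy adj_colour_neq.
have ba1' : b != a1 := neq_of_colour cb.
have ba2' : b != a2 by apply: neq_of_colour; rewrite ca.
have yb : y \notin [:: b; a1; a2] by rewrite !inE !negb_or ya1 ya2 eq_sym (adj_neq eby).
exfalso; apply: (no_forcing_triple_at ba1' ba2' a12) => //.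
  apply: forced_b_vertex => // x; rewrite !inE => /or3P[] /eqP-> bx.
  - by rewrite irr_e in bx.
  - by exists y; rewrite ?eby ?cy ?eqxx.
  - by exists y; rewrite ?eby ?cy ?ca ?eqxx.
apply: forced_b_vertex_isolated => // x; rewrite !inE => /orP[] /eqP-> //.
by rewrite irr_e.
Qed.

End BVertexPair.

Section BVertexPairComponent.
Variables a1 a2 : T.
Hypotheses (a12 : a1 != a2) (ca : c a2 = c a1).
Hypotheses (ba1 : b_vertex e c a1) (ba2 : b_vertex e c a2).

Let a21 : a2 != a1. Proof. by rewrite eq_sym. Qed.

Lemma b_vertex_nbr_unique b y :
  b_vertex e c b -> e a1 b -> e b y -> c y = c a1 -> y = a1.
Proof.
move=> bb a1b eby cy.
case/orP: (b_vertex_nbr_in_pair a12 ca ba1 ba2 bb eby cy) => /eqP // ya2; subst y.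
have [b' b'b /andP[/eqP cb' bb']] := another_b_vertex (c b) b.
have cb'a1 : c b' != c a1 by rewrite cb' eq_sym adj_colour_neq.
case/orP: (b_vertex_adj_pair a12 ca ba1 ba2 bb' cb'a1) => [a1b' | a2b'].
  by move: b'b; rewrite (adj_b_vertex_colour_unique a12 ca ba1 ba2 bb a1b a1b' cb') eqxx.
have a2b : e a2 b by rewrite sym_e.
by move: b'b; rewrite (adj_b_vertex_colour_unique a21 (esym ca) ba2 ba1 bb a2b a2b' cb') eqxx.
Qed.

Lemma nbr_b_vertex x : e a1 x -> b_vertex e c x.
Proof.
move=> a1x; have [p px /andP[/eqP cp bp]] := another_b_vertex (c x) x.
have [q qp /andP[/eqP cq bq]] := another_b_vertex (c x) p.
suff [b [bb cb a1b]] : exists b, [/\ b_vertex e c b, c b = c x & e a1 b].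
  by rewrite (adj_b_vertex_colour_unique a12 ca ba1 ba2 bb a1b a1x (esym cb)).
have cpa1 : c p != c a1 by rewrite cp eq_sym adj_colour_neq.
have cqa1 : c q != c a1 by rewrite cq eq_sym adj_colour_neq.
case/orP: (b_vertex_adj_pair a12 ca ba1 ba2 bp cpa1) => [a1p | a2p]; first by exists p.
case/orP: (b_vertex_adj_pair a12 ca ba1 ba2 bq cqa1) => [a1q | a2q]; first by exists q.
have cqp : c q = c p by rewrite cp cq.
by move: qp; rewrite (adj_b_vertex_colour_unique a21 (esym ca) ba2 ba1 bp a2p a2q cqp) eqxx.
Qed.

Lemma nbr_nonadj_twin x : e a1 x -> ~~ e a2 x.
Proof.
move=> a1x; apply/negP => a2x; have xa2 : e x a2 by rewrite sym_e.
by move: a12; rewrite -(b_vertex_nbr_unique (nbr_b_vertex a1x) a1x xa2 ca) eqxx.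
Qed.

Lemma nbr_closed u y : e a1 u -> e u y -> (y == a1) || e a1 y.
Proof.
move=> a1u uy; have bu := nbr_b_vertex a1u.
have [cy | cy] := eqVneq (c y) (c a1).
  by rewrite (b_vertex_nbr_unique bu a1u uy cy) eqxx.
have [z a1z cz] : exists2 z, e a1 z & c z = c y.
  by have /existsP[z /andP[a1z /eqP cz]] := implyP (forallP ba1 (c y)) cy; exists z.
have bz := nbr_b_vertex a1z.
have uz : e u z.
  apply: contraT => nuz; exfalso.
  have cu : c u != c a1 by rewrite eq_sym adj_colour_neq.
  have a2u : a2 != u by apply: neq_of_colour; rewrite ca eq_sym.
  have a2z : a2 != z by apply: neq_of_colour; rewrite ca cz eq_sym.
  have u_neq_z : u != z by apply: neq_of_colour; rewrite cz adj_colour_neq.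
  apply: (no_forcing_triple_at a2u a2z u_neq_z) => //.
    apply: forced_b_vertex_isolated => // w; rewrite !inE => /or3P[] /eqP->.
    - by rewrite irr_e.
    - exact: nbr_nonadj_twin.
    - exact: nbr_nonadj_twin.
  apply: forced_b_vertex_isolated => // w; rewrite !inE => /orP[] /eqP-> //.
  by rewrite irr_e.
have [u' u'u /andP[/eqP cu' bu']] := another_b_vertex (c u) u.
have uu' : u != u' by rewrite eq_sym.
by rewrite (adj_b_vertex_colour_unique uu' cu' bu bu' bz uz uy (esym cz)) a1z orbT.
Qed.

Lemma b_vertex_pair_disconnected : ~~ connect e a1 a2.
Proof.
pose Q := [set x | (x == a1) || e a1 x].
have clQ : closed e Q.
  apply: (intro_closed (sym_connect_sym sym_e)) => x y xy; rewrite !inE.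
  by case/orP => [/eqP<- | a1x]; [rewrite xy orbT | apply: nbr_closed a1x xy].
apply/negP => /(closed_connect clQ); rewrite !inE eqxx eq_sym (negbTE a12) /=.
by rewrite (negbTE (same_colour_nonadj (esym ca))).
Qed.

End BVertexPairComponent.

End TwoBVerticesPerClass.

Theorem lemma1 (T : finType) (e : rel T) :
  symmetric e -> irreflexive e -> connected e ->
  sn e + 2 = #|T| -> ivs_chi e = 1.
Proof.
move=> sym_e irr_e conn sn_n.
have n_gt1 : 1 < #|T| by rewrite -sn_n addn2.
have /card_gt0P[v0 _] := ltnW n_gt1.
have /existsP[c pc] := colourable_chi irr_e.
have no_triple u1 u2 u3 : uniq [:: u1; u2; u3] -> ~~ forcing_seq e c [:: u1; u2; u3].
  by move=> uniq_u; apply/negP => /(sn_forcing_seq pc uniq_u); rewrite -sn_n leq_add2l.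
case: (boolP [forall l, forall v, exists w, [&& w != v, c w == l & b_vertex e c w]]).
  move=> /forallP many.
  have another l v : exists2 w, w != v & (c w == l) && b_vertex e c w.
    by have /existsP[w /and3P[wv cw bw]] := forallP (many l) v; exists w; rewrite ?cw.
  have [a1 _ /andP[/eqP ca1 ba1]] := another (c v0) v0.
  have [a2 a21 /andP[/eqP ca2 ba2]] := another (c v0) a1.
  have a12 : a1 != a2 by rewrite eq_sym.
  have ca : c a2 = c a1 by rewrite ca1 ca2.
  have := b_vertex_pair_disconnected sym_e irr_e pc another no_triple a12 ca ba1 ba2.
  by rewrite conn.
move=> /forallPn[i /forallPn[f /existsPn lone]].
apply: (ivs_chi_eq1 irr_e (f := f)).
apply: (chi_delete_lone_b_vertex sym_e (i := i) pc n_gt1) => v cv bv.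
by apply/eqP; apply: contraNT (lone v) => vf; rewrite vf cv eqxx bv.
Qed.
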